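(* Let $p$ be a non-constant polynomial with real coefficients and let $Q=\{p(k);\,k\ge0\}\subseteq\mathbb R$. Then for every $\delta>0$, the set $(-\delta,\delta)\cup Q$ is a Kazhdan set in $\mathbb R$.
   Context: $\mathbb R$ is the additive group with its usual topology. A subset $Q$ is a Kazhdan set in $\mathbb R$ if there exists $\varepsilon>0$ such that every strongly continuous unitary representation $\pi$ of $\mathbb R$ having a vector $x$ with $\sup_{t\in Q}\|\pi(t)x-x\|<\varepsilon\|x\|$ has a non-zero $\mathbb R$-invariant vector. *)

From Stdlib Require Import Reals List.
Open Scope R_scope.

Definition C : Type := (R * R)%type.
Definition Cre (z : C) : R := fst z.
Definition Cim (z : C) : R := snd z.
Definition Cadd (z w : C) : C := (fst z + fst w, snd z + snd w).
Definition Cmul (z w : C) : C :=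
  (fst z * fst w - snd z * snd w, fst z * snd w + snd z * fst w).
Definition Cconj (z : C) : C := (fst z, - snd z).
Definition C0 : C := (0, 0).
Definition C1 : C := (1, 0).
Definition Cneg1 : C := (-1, 0).

Record HilbertSpace : Type := mkHilbert {
  hcar :> Type;
  hzero : hcar;
  hadd : hcar -> hcar -> hcar;
  hscal : C -> hcar -> hcar;
  hinner : hcar -> hcar -> C;   (* linear in the first argument *)
  hadd_assoc : forall x y z, hadd x (hadd y z) = hadd (hadd x y) z;
  hadd_comm : forall x y, hadd x y = hadd y x;
  hadd_zero : forall x, hadd x hzero = x;
  hadd_inv : forall x, hadd x (hscal Cneg1 x) = hzero;
  hscal_one : forall x, hscal C1 x = x;
  hscal_assoc : forall a b x, hscal a (hscal b x) = hscal (Cmul a b) x;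
  hscal_distr_v : forall a x y, hscal a (hadd x y) = hadd (hscal a x) (hscal a y);
  hscal_distr_s : forall a b x, hscal (Cadd a b) x = hadd (hscal a x) (hscal b x);
  hinner_conj : forall x y, hinner y x = Cconj (hinner x y);
  hinner_add : forall x y z, hinner (hadd x y) z = Cadd (hinner x z) (hinner y z);
  hinner_scal : forall a x y, hinner (hscal a x) y = Cmul a (hinner x y);
  hinner_pos : forall x, 0 <= Cre (hinner x x);
  hinner_def : forall x, hinner x x = C0 -> x = hzero;
  hcomplete : forall u : nat -> hcar,
    (forall eps, 0 < eps -> exists N, forall n m, (n >= N)%nat -> (m >= N)%nat ->
        sqrt (Cre (hinner (hadd (u n) (hscal Cneg1 (u m)))
                          (hadd (u n) (hscal Cneg1 (u m))))) < eps) ->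
    exists l, forall eps, 0 < eps -> exists N, forall n, (n >= N)%nat ->
        sqrt (Cre (hinner (hadd (u n) (hscal Cneg1 l))
                          (hadd (u n) (hscal Cneg1 l)))) < eps
}.

Arguments hzero {h}.
Arguments hadd {h}.
Arguments hscal {h}.
Arguments hinner {h}.

Definition hsub {H : HilbertSpace} (x y : H) : H := hadd x (hscal Cneg1 y).
Definition hnorm {H : HilbertSpace} (x : H) : R := sqrt (Cre (hinner x x)).

Definition unitary_rep (H : HilbertSpace) (pi : R -> H -> H) : Prop :=
  (forall t x y, pi t (hadd x y) = hadd (pi t x) (pi t y)) /\
  (forall t a x, pi t (hscal a x) = hscal a (pi t x)) /\
  (forall t x y, hinner (pi t x) (pi t y) = hinner x y) /\
  (forall t y, exists x, pi t x = y) /\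
  (forall x, pi 0 x = x) /\
  (forall s t x, pi (s + t) x = pi s (pi t x)).

Definition strongly_continuous (H : HilbertSpace) (pi : R -> H -> H) : Prop :=
  forall (x : H) (t0 eps : R), 0 < eps ->
    exists d, 0 < d /\ forall t, Rabs (t - t0) < d -> hnorm (hsub (pi t x) (pi t0 x)) < eps.

(** sup_{t in Q} ||pi(t)x - x|| < eps ||x||  (the sup is over a set bounded by 2||x||;
    the strict inequality for the supremum means some c < eps||x|| bounds all terms) *)
Definition sup_displacement_lt (H : HilbertSpace) (pi : R -> H -> H)
    (Q : R -> Prop) (x : H) (bound : R) : Prop :=
  exists c, c < bound /\ forall t, Q t -> hnorm (hsub (pi t x) x) <= c.

Definition kazhdan_set (Q : R -> Prop) : Prop :=
  exists eps, 0 < eps /\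
    forall (H : HilbertSpace) (pi : R -> H -> H),
      unitary_rep H pi -> strongly_continuous H pi ->
      (exists x : H, sup_displacement_lt H pi Q x (eps * hnorm x)) ->
      exists v : H, v <> hzero /\ forall t, pi t v = v.

(** * Real polynomials as coefficient lists [a0; a1; ...; an] *)
Fixpoint peval (p : list R) (x : R) : R :=
  match p with
  | nil => 0
  | a :: q => a + x * peval q x
  end.

Definition nonconstant_poly (p : list R) : Prop :=
  exists i, (1 <= i)%nat /\ nth i p 0 <> 0.

From Stdlib Require Import Reals List Lra Lia Classical IndefiniteDescription.
Open Scope R_scope.

(* Fix [x] and let [d t = |pi(t) x - x|]; this is a length function on R:
   subadditive, even, [d 0 = 0].  If [p] has degree [n >= 1], its [(n-1)]-st finite
   difference is [t |-> alpha t + beta] with [alpha <> 0].  Each difference at most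
   doubles a bound of [d] on the integer points, so [d] is bounded on the progression
   [alpha N] by a multiple of its bound on [Q]; with the bound on [(-delta, delta)]
   this bounds [d] on all of R by [K sup_Q d], where [K] depends only on [p] and
   [delta].  Hence [eps = 1 / (2K)] forces [d <= |x| / 2] everywhere, so the closed
   convex hull of the orbit of [x] stays away from [0], and its point of least norm is
   a nonzero invariant vector. *)

(* [poly_lead n a f]: [f] is a polynomial function of degree at most [n] whose
   coefficient of [x ^ n] is [a]. *)
Fixpoint poly_lead (n : nat) (a : R) (f : R -> R) : Prop :=
  match n with
  | O => forall x, f x = a
  | S m => exists c g, poly_lead m a g /\ forall x, f x = c + x * g x
  end.

Lemma poly_lead_ext n a f g : poly_lead n a f -> (forall x, f x = g x) -> poly_lead n a g.
Proof.
  destruct n as [|n]; simpl; intros Hf E.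
  - intros x; rewrite <- E; auto.
  - destruct Hf as [c [h [Hh Hf]]]. exists c, h; split; auto.
    intros x; rewrite <- E; auto.
Qed.

Lemma poly_lead_zero n : poly_lead n 0 (fun _ => 0).
Proof.
  induction n; simpl; auto.
  exists 0, (fun _ => 0); split; auto. intros; ring.
Qed.

Lemma poly_lead_succ n : forall b f, poly_lead n b f -> poly_lead (S n) 0 f.
Proof.
  induction n; simpl; intros b f Hf.
  - exists b, (fun _ => 0); split; auto. intros x; rewrite Hf; ring.
  - destruct Hf as [c [h [Hh Hf]]]. exists c, h; split; [eapply IHn|]; eauto.
Qed.

Lemma poly_lead_add n : forall a b f g, poly_lead n a f -> poly_lead n b g ->
  poly_lead n (a + b) (fun x => f x + g x).
Proof.
  induction n; simpl; intros a b f g Hf Hg.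
  - intros x; rewrite Hf, Hg; auto.
  - destruct Hf as [c [h [Hh Hf]]], Hg as [c' [h' [Hh' Hg]]].
    exists (c + c'), (fun x => h x + h' x); split; auto.
    intros x; rewrite Hf, Hg; ring.
Qed.

Lemma poly_lead_mulx n a g : poly_lead n a g -> poly_lead (S n) a (fun x => x * g x).
Proof. simpl; intros. exists 0, g; split; auto. intros; ring. Qed.

Lemma poly_lead_addc n a c f : poly_lead (S n) a f -> poly_lead (S n) a (fun x => c + f x).
Proof.
  simpl; intros [c0 [h [Hh Hf]]]. exists (c + c0), h; split; auto.
  intros x; rewrite Hf; ring.
Qed.

Lemma poly_lead_shift n : forall a g, poly_lead n a g -> poly_lead n a (fun x => g (x + 1)).
Proof.
  induction n; intros a g Hg.
  - simpl in *; auto.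
  - destruct Hg as [c [h [Hh Hg]]].
    apply poly_lead_ext with (fun x => c + (h (x + 1) + x * h (x + 1))).
    + apply poly_lead_addc. replace a with (0 + a) by ring. apply poly_lead_add.
      * apply (poly_lead_succ n a), IHn; auto.
      * apply poly_lead_mulx, IHn; auto.
    + intros x; rewrite Hg; ring.
Qed.

Definition fdiff (f : R -> R) (x : R) : R := f (x + 1) - f x.

Lemma poly_lead_fdiff n : forall a f, poly_lead (S n) a f -> poly_lead n (INR (S n) * a) (fdiff f).
Proof.
  induction n; intros a f [c [h [Hh Hf]]].
  - simpl in *. intros x; unfold fdiff; rewrite !Hf, !Hh; ring.
  - apply poly_lead_ext with (fun x => h (x + 1) + x * fdiff h x).
    + replace (INR (S (S n)) * a) with (a + INR (S n) * a) by (rewrite (S_INR (S n)); ring).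
      apply poly_lead_add.
      * apply poly_lead_shift; auto.
      * apply poly_lead_mulx, IHn; auto.
    + intros x; unfold fdiff; rewrite !Hf; ring.
Qed.

Lemma poly_lead_fdiff_iter k : forall j a f, poly_lead (k + j) a f -> a <> 0 ->
  exists b, b <> 0 /\ poly_lead j b (Nat.iter k fdiff f).
Proof.
  induction k as [|k IH]; intros j a f Hf Ha.
  - exists a; auto.
  - rewrite Nat.add_succ_comm in Hf.
    destruct (IH _ _ _ Hf Ha) as [b [Hb Hk]].
    exists (INR (S j) * b); split.
    + apply Rmult_integral_contrapositive_currified; auto. apply not_0_INR; lia.
    + rewrite Nat.iter_succ. apply poly_lead_fdiff; auto.
Qed.

Lemma peval_nth_zero q : (forall i, nth i q 0 = 0) -> forall x, peval q x = 0.
Proof.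
  induction q as [|c q IH]; simpl; intros Hq x; auto.
  rewrite (Hq O), IH; [ring|]. intros i; apply (Hq (S i)).
Qed.

Lemma poly_lead_peval p : forall n, (forall i, (n < i)%nat -> nth i p 0 = 0) ->
  poly_lead n (nth n p 0) (peval p).
Proof.
  induction p as [|c q IH]; intros n Hp.
  - destruct n; apply poly_lead_zero.
  - destruct n; simpl.
    + intros x. rewrite peval_nth_zero; [ring|]. intros i; apply (Hp (S i)); lia.
    + exists c, (peval q); split; auto.
      apply IH. intros i Hi. apply (Hp (S i)); lia.
Qed.

Lemma nonconstant_poly_degree p : nonconstant_poly p ->
  exists n, (1 <= n)%nat /\ nth n p 0 <> 0 /\ forall i, (n < i)%nat -> nth i p 0 = 0.
Proof.
  intros [i0 [Hi0 Hp0]].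
  enough (Hdeg : forall N, (forall i, (N <= i)%nat -> nth i p 0 = 0) ->
    exists n, (1 <= n)%nat /\ nth n p 0 <> 0 /\ forall i, (n < i)%nat -> nth i p 0 = 0).
  { apply (Hdeg (length p)). intros i Hi; apply nth_overflow; auto. }
  induction N as [|N IHN]; intros HN.
  - exfalso; apply Hp0, HN; lia.
  - destruct (Req_dec (nth N p 0) 0) as [E|E].
    + apply IHN. intros i Hi. destruct (Nat.eq_dec i N); subst; auto. apply HN; lia.
    + destruct N as [|N].
      * exfalso; apply Hp0, HN; lia.
      * exists (S N); repeat split; auto; lia.
Qed.

Lemma fdiff_iter_peval_affine p : nonconstant_poly p ->
  exists k alpha beta, alpha <> 0 /\ forall x, Nat.iter k fdiff (peval p) x = alpha * x + beta.
Proof.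
  intros Hp. destruct (nonconstant_poly_degree p Hp) as [n [Hn [Hlead Hhigh]]].
  assert (Hpeval : poly_lead ((n - 1) + 1) (nth n p 0) (peval p)).
  { replace (n - 1 + 1)%nat with n by lia. apply poly_lead_peval; auto. }
  destruct (poly_lead_fdiff_iter _ _ _ _ Hpeval Hlead) as [b [Hb [c [g [Hg Haff]]]]].
  exists (n - 1)%nat, b, c; split; auto.
  intros x; rewrite Haff, Hg; ring.
Qed.

Lemma nat_floor A t : 0 < A -> 0 <= t -> exists m : nat, A * INR m <= t < A * INR (S m).
Proof.
  intros HA Ht.
  destruct (INR_archimed A t HA) as [N HN].
  induction N as [|N IHN].
  - simpl in HN; lra.
  - destruct (Rlt_dec t (A * INR N)) as [L|L].
    + apply IHN; lra.
    + exists N; lra.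
Qed.

Section LengthFunction.

Variable d : R -> R.
Hypothesis length_add : forall s t, d (s + t) <= d s + d t.
Hypothesis length_opp : forall t, d (- t) = d t.
Hypothesis length_0 : d 0 = 0.

Lemma length_sub s t : d (s - t) <= d s + d t.
Proof. rewrite <- (length_opp t). apply length_add. Qed.

Lemma length_abs t : d (Rabs t) = d t.
Proof. unfold Rabs; destruct (Rcase_abs t); auto. Qed.

Lemma length_mul_nat n s : d (INR n * s) <= INR n * d s.
Proof.
  induction n as [|n IHn].
  - simpl. rewrite Rmult_0_l, length_0; lra.
  - rewrite S_INR, Rmult_plus_distr_r, Rmult_1_l.
    pose proof (length_add (INR n * s) s). lra.
Qed.

Lemma length_fdiff_iter f c : (forall m : nat, d (f (INR m)) <= c) ->
  forall k m, d (Nat.iter k fdiff f (INR m)) <= 2 ^ k * c.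
Proof.
  intros Hf k. induction k as [|k IHk]; intros m.
  - simpl; rewrite Rmult_1_l; auto.
  - rewrite Nat.iter_succ. unfold fdiff at 1. rewrite <- S_INR.
    pose proof (length_sub (Nat.iter k fdiff f (INR (S m))) (Nat.iter k fdiff f (INR m))).
    pose proof (IHk (S m)); pose proof (IHk m). change (2 ^ S k) with (2 * 2 ^ k). lra.
Qed.

Lemma length_le_ball delta c N t : (forall s, Rabs s < delta -> d s <= c) ->
  Rabs t < INR N * delta -> d t <= INR N * c.
Proof.
  intros Hball Ht. destruct N as [|N].
  - pose proof (Rabs_pos t). simpl in Ht; lra.
  - assert (HN : 0 < INR (S N)) by (apply lt_0_INR; lia).
    replace t with (INR (S N) * (t / INR (S N))) by (field; lra).
    eapply Rle_trans; [apply length_mul_nat|].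
    apply Rmult_le_compat_l; [lra|]. apply Hball.
    unfold Rdiv; rewrite Rabs_mult, Rabs_inv, (Rabs_right (INR (S N))) by lra.
    apply Rmult_lt_reg_r with (INR (S N)); auto.
    rewrite Rmult_assoc, Rinv_l by lra. lra.
Qed.

(* Every [t] is within [A] of a multiple of [A] (up to sign, which [d] ignores). *)
Lemma length_le_progression A c1 c2 t : 0 < A ->
  (forall m : nat, d (A * INR m) <= c1) -> (forall r, 0 <= r < A -> d r <= c2) ->
  d t <= c1 + c2.
Proof.
  intros HA Hmul Hrem. rewrite <- length_abs.
  destruct (nat_floor A (Rabs t) HA (Rabs_pos t)) as [m Hm].
  rewrite S_INR in Hm.
  replace (Rabs t) with (A * INR m + (Rabs t - A * INR m)) by ring.
  eapply Rle_trans; [apply length_add|].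
  pose proof (Hmul m). pose proof (Hrem (Rabs t - A * INR m) ltac:(lra)). lra.
Qed.

(* Differences of values at the integers cost a factor 2 each, and an affine
   [x |-> alpha x + beta] turns into a genuine progression [alpha m] after one more. *)
Lemma length_bound_of_fdiff_affine f k alpha beta delta N c :
  (forall x, Nat.iter k fdiff f x = alpha * x + beta) -> alpha <> 0 ->
  Rabs alpha < INR N * delta ->
  (forall s, Rabs s < delta -> d s <= c) -> (forall m : nat, d (f (INR m)) <= c) ->
  forall t, d t <= (2 * 2 ^ k + INR N) * c.
Proof.
  intros Haff Halpha HN Hball Hf t.
  assert (Hprog : forall m : nat, d (alpha * INR m) <= 2 * 2 ^ k * c).
  { intros m.
    replace (alpha * INR m) with (Nat.iter k fdiff f (INR m) - Nat.iter k fdiff f (INR 0))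
      by (rewrite !Haff; simpl; ring).
    pose proof (length_fdiff_iter f c Hf k m); pose proof (length_fdiff_iter f c Hf k 0).
    pose proof (length_sub (Nat.iter k fdiff f (INR m)) (Nat.iter k fdiff f (INR 0))). lra. }
  rewrite Rmult_plus_distr_r.
  apply (length_le_progression (Rabs alpha)).
  - apply Rabs_pos_lt; auto.
  - intros m. unfold Rabs; destruct (Rcase_abs alpha); auto.
    rewrite Ropp_mult_distr_l_reverse, length_opp; auto.
  - intros r Hr. apply (length_le_ball delta); auto.
    rewrite Rabs_right; lra.
Qed.

End LengthFunction.

Lemma discriminant_nonpos A B C : 0 <= C ->
  (forall r, 0 <= A - 2 * r * B + r * r * C) -> B * B <= A * C.
Proof.
  intros HC Hq. destruct (Rle_lt_or_eq_dec _ _ HC) as [Cpos|C0].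
  - pose proof (Hq (B / C)) as Hr.
    replace (A - 2 * (B / C) * B + B / C * (B / C) * C) with (A - B * B / C) in Hr
      by (field; lra).
    apply Rmult_le_reg_r with (/ C); [apply Rinv_0_lt_compat; auto|].
    replace (A * C * / C) with A by (field; lra). unfold Rdiv in Hr; lra.
  - subst C. destruct (Req_dec B 0) as [B0|B0]; [subst; lra|].
    pose proof (Hq ((A + 1) / (2 * B))) as Hr.
    replace (A - 2 * ((A + 1) / (2 * B)) * B + (A + 1) / (2 * B) * ((A + 1) / (2 * B)) * 0)
      with (-1) in Hr by (field; auto). lra.
Qed.

Lemma sqrt_lt_of_lt_sq u e : 0 < e -> u < e * e -> sqrt u < e.
Proof.
  intros He Hu. destruct (Rle_dec 0 u).
  - rewrite <- (sqrt_square e) by lra. apply sqrt_lt_1_alt; lra.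
  - rewrite sqrt_neg_0; lra.
Qed.

Lemma inv_succ_lt e : 0 < e -> exists N : nat, forall n, (N <= n)%nat -> / (INR n + 1) < e.
Proof.
  intros He. destruct (archimed_cor1 e He) as [N [HN HN0]]. exists N. intros n Hn.
  apply le_INR in Hn. apply lt_0_INR in HN0.
  eapply Rlt_trans; [|apply HN]. apply Rinv_lt_contravar; nra.
Qed.

Section HilbertGeometry.

Variable H : HilbertSpace.
Implicit Types a b c u v w y z : H.

(* The real part of the inner product: the inner product of the underlying real space. *)
Definition ip a b : R := Cre (hinner a b).

Lemma ip_sym a b : ip a b = ip b a.
Proof. unfold ip. rewrite (hinner_conj H a b). reflexivity. Qed.

Lemma ip_addl a b c : ip (hadd a b) c = ip a c + ip b c.
Proof. unfold ip. rewrite hinner_add. reflexivity. Qed.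

Lemma ip_addr a b c : ip c (hadd a b) = ip c a + ip c b.
Proof. rewrite ip_sym, ip_addl, (ip_sym a), (ip_sym b); auto. Qed.

Lemma ip_scalel r a b : ip (hscal (r, 0) a) b = r * ip a b.
Proof. unfold ip. rewrite hinner_scal. unfold Cmul, Cre; simpl; ring. Qed.

Lemma ip_scaler r a b : ip b (hscal (r, 0) a) = r * ip b a.
Proof. rewrite ip_sym, ip_scalel, ip_sym; auto. Qed.

Lemma ip_subl a b c : ip (hsub a b) c = ip a c - ip b c.
Proof. unfold hsub. rewrite ip_addl. unfold ip. rewrite hinner_scal. unfold Cmul, Cre; simpl; ring. Qed.

Lemma ip_subr a b c : ip c (hsub a b) = ip c a - ip c b.
Proof. rewrite ip_sym, ip_subl, (ip_sym a), (ip_sym b); auto. Qed.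

Lemma ip_sub_sub a b a' b' : ip (hsub a b) (hsub a' b') = ip a a' - ip a b' - ip b a' + ip b b'.
Proof. rewrite ip_subl, !ip_subr; ring. Qed.

Lemma ip_zerol a : ip hzero a = 0.
Proof.
  assert (E : ip (hadd hzero hzero) a = ip hzero a) by (rewrite hadd_zero; auto).
  rewrite ip_addl in E; lra.
Qed.

Lemma ip_eq0 a : ip a a = 0 -> a = hzero.
Proof.
  intros E. apply hinner_def. unfold ip, Cre in E.
  pose proof (hinner_conj H a a) as Ec. unfold Cconj in Ec.
  destruct (hinner a a) as [r i]. simpl in *. injection Ec; intros. unfold C0.
  f_equal; lra.
Qed.

Lemma hnorm_ge0 a : 0 <= hnorm a.
Proof. apply sqrt_pos. Qed.

Lemma hnorm_zero : hnorm (@hzero H) = 0.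
Proof. unfold hnorm. fold (ip hzero hzero). rewrite ip_zerol. apply sqrt_0. Qed.

Lemma hnorm_sq a : hnorm a * hnorm a = ip a a.
Proof. apply sqrt_sqrt, hinner_pos. Qed.

Lemma hnorm_lt_of_ip a e : 0 < e -> ip a a < e * e -> hnorm a < e.
Proof. apply sqrt_lt_of_lt_sq. Qed.

Lemma cauchy_schwarz a b : Rabs (ip a b) <= hnorm a * hnorm b.
Proof.
  assert (Hdisc : ip a b * ip a b <= ip a a * ip b b).
  { apply discriminant_nonpos; [apply hinner_pos|]. intros r.
    pose proof (hinner_pos H (hadd a (hscal (- r, 0) b))) as P.
    fold (ip (hadd a (hscal (- r, 0) b)) (hadd a (hscal (- r, 0) b))) in P.
    rewrite ip_addl, !ip_addr, !ip_scalel, !ip_scaler, (ip_sym b a) in P. nra. }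
  rewrite <- (hnorm_sq a), <- (hnorm_sq b) in Hdisc.
  pose proof (Rmult_le_pos _ _ (hnorm_ge0 a) (hnorm_ge0 b)).
  rewrite <- (Rabs_right (hnorm a * hnorm b)) by lra.
  apply Rsqr_le_abs_0. unfold Rsqr; nra.
Qed.

Lemma hnorm_sub_triangle a b c : hnorm (hsub a c) <= hnorm (hsub a b) + hnorm (hsub b c).
Proof.
  set (u := hsub a b); set (v := hsub b c).
  assert (E : ip (hsub a c) (hsub a c) = ip u u + 2 * ip u v + ip v v).
  { unfold u, v. rewrite !ip_sub_sub, (ip_sym c a), (ip_sym b a), (ip_sym c b). ring. }
  pose proof (cauchy_schwarz u v); pose proof (Rle_abs (ip u v)).
  pose proof (hnorm_ge0 u); pose proof (hnorm_ge0 v).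
  unfold hnorm at 1. rewrite <- (sqrt_square (hnorm u + hnorm v)) by lra.
  apply sqrt_le_1_alt. fold (ip (hsub a c) (hsub a c)).
  rewrite E, <- !hnorm_sq. nra.
Qed.

Lemma hnorm_sub_sym a b : hnorm (hsub a b) = hnorm (hsub b a).
Proof.
  unfold hnorm. f_equal. fold (ip (hsub a b) (hsub a b)) (ip (hsub b a) (hsub b a)).
  rewrite !ip_sub_sub, (ip_sym b a). ring.
Qed.

Lemma hnorm_sub_eq0 a b : hnorm (hsub a b) = 0 -> a = b.
Proof.
  intros E. apply sqrt_eq_0 in E; [|apply hinner_pos].
  apply ip_eq0 in E. unfold hsub in E.
  rewrite <- (hadd_zero H a), <- (hadd_inv H b), (hadd_comm H b), hadd_assoc, E.
  rewrite hadd_comm, hadd_zero; auto.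
Qed.

Definition hmid y w : H := hscal (/ 2, 0) (hadd y w).

Lemma parallelogram y w :
  ip (hsub y w) (hsub y w) = 2 * ip y y + 2 * ip w w - 4 * ip (hmid y w) (hmid y w).
Proof.
  unfold hmid. rewrite ip_sub_sub, ip_scalel, ip_scaler, ip_addl, !ip_addr, (ip_sym w y).
  field.
Qed.

Definition hlim (Y : nat -> H) z : Prop :=
  forall e, 0 < e -> exists N, forall n, (n >= N)%nat -> hnorm (hsub (Y n) z) < e.

Definition minimizing_seq (S : H -> Prop) (m : R) (Y : nat -> H) : Prop :=
  (forall u, S u -> m <= ip u u) /\ forall n, S (Y n) /\ ip (Y n) (Y n) < m + / (INR n + 1).

Lemma minimizing_seq_exists (S : H -> Prop) y0 : S y0 -> exists m Y, minimizing_seq S m Y.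
Proof.
  intros Sy0.
  set (E := fun r => exists y, S y /\ r = - ip y y).
  assert (Eb : bound E).
  { exists 0. intros r [y [_ ->]]. pose proof (hinner_pos H y). unfold ip; lra. }
  destruct (completeness E Eb (ex_intro _ _ (ex_intro _ y0 (conj Sy0 eq_refl))))
    as [sup [Hub Hlub]].
  assert (Happrox : forall n : nat, exists y, S y /\ ip y y < - sup + / (INR n + 1)).
  { intros n. apply NNPP. intros Hno.
    assert (sup <= sup - / (INR n + 1)).
    { apply Hlub. intros r [y [Sy ->]].
      apply Rnot_lt_le. intros Hlt. apply Hno. exists y; split; auto; lra. }
    assert (0 < / (INR n + 1)) by (apply Rinv_0_lt_compat; pose proof (pos_INR n); lra).
    lra. }
  destruct (functional_choice _ Happrox) as [Y HY].
  exists (- sup), Y; split; auto.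
  intros u Su. assert (Hu : E (- ip u u)) by (exists u; auto). apply Hub in Hu. lra.
Qed.

Section MidpointConvex.

Variable S : H -> Prop.
Hypothesis S_hmid : forall y w, S y -> S w -> S (hmid y w).

(* By the parallelogram law, two points of [S] whose squared norms are close to the
   infimum [m] are close to each other, since their midpoint also lies in [S]. *)
Lemma minimizing_pair_close m e y w : (forall u, S u -> m <= ip u u) -> 0 < e ->
  S y -> S w -> ip y y < m + e * e / 4 -> ip w w < m + e * e / 4 -> hnorm (hsub y w) < e.
Proof.
  intros Hm He Sy Sw Hy Hw. apply hnorm_lt_of_ip; auto.
  rewrite parallelogram. pose proof (Hm _ (S_hmid y w Sy Sw)). lra.
Qed.

Lemma minimizing_seq_converges m Y : minimizing_seq S m Y -> exists z, hlim Y z.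
Proof.
  intros [Hm HY]. apply (hcomplete H Y).
  intros e He. destruct (inv_succ_lt (e * e / 4)) as [N HN]; [nra|].
  exists N. intros n n' Hn Hn'.
  destruct (HY n) as [Sn In], (HY n') as [Sn' In'].
  pose proof (HN n Hn); pose proof (HN n' Hn').
  apply (minimizing_pair_close m); auto; lra.
Qed.

End MidpointConvex.

End HilbertGeometry.

Section Representation.

Variables (H : HilbertSpace) (pi : R -> H -> H).
Hypothesis pi_unitary : unitary_rep H pi.
Implicit Types a b x y w z : H.

Lemma pi_0 a : pi 0 a = a.
Proof. apply pi_unitary. Qed.

Lemma pi_add s t a : pi (s + t) a = pi s (pi t a).
Proof. apply pi_unitary. Qed.

Lemma pi_hmid t y w : pi t (hmid H y w) = hmid H (pi t y) (pi t w).
Proof. unfold hmid. destruct pi_unitary as [Hadd [Hscal _]]. rewrite Hscal, Hadd; auto. Qed.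

Lemma pi_hsub t a b : pi t (hsub a b) = hsub (pi t a) (pi t b).
Proof. unfold hsub. destruct pi_unitary as [Hadd [Hscal _]]. rewrite Hadd, Hscal; auto. Qed.

Lemma ip_pi t a b : ip H (pi t a) (pi t b) = ip H a b.
Proof. unfold ip. destruct pi_unitary as [_ [_ [Hip _]]]. rewrite Hip; auto. Qed.

Lemma hnorm_pi t a : hnorm (pi t a) = hnorm a.
Proof. apply (f_equal sqrt), (ip_pi t a a). Qed.

(* Since [pi s] preserves [S] and the norm, [pi s (Y n)] is again minimizing, hence
   close to [Y n]; in the limit [pi s z = z]. *)
Lemma minimizing_seq_limit_fixed (S : H -> Prop) m Y z :
  (forall y w, S y -> S w -> S (hmid H y w)) -> (forall s y, S y -> S (pi s y)) ->
  minimizing_seq H S m Y -> hlim H Y z -> forall s, pi s z = z.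
Proof.
  intros S_hmid S_pi [Hm HY] Hz s. apply (hnorm_sub_eq0 H).
  apply Rle_antisym; [|apply hnorm_ge0]. apply Rnot_lt_le. intros He.
  set (e := hnorm (hsub (pi s z) z)) in *.
  destruct (Hz (e / 3)) as [N1 HN1]; [lra|].
  destruct (inv_succ_lt (e / 3 * (e / 3) / 4)) as [N2 HN2]; [nra|].
  set (n := Nat.max N1 N2).
  pose proof (HN1 n (Nat.le_max_l _ _)) as Hclose.
  pose proof (HN2 n (Nat.le_max_r _ _)) as Hn.
  destruct (HY n) as [Sn In].
  assert (Hmove : hnorm (hsub (pi s (Y n)) (Y n)) < e / 3).
  { apply (minimizing_pair_close H S S_hmid m); auto; try lra.
    rewrite ip_pi; lra. }
  pose proof (hnorm_sub_triangle H (pi s z) (pi s (Y n)) z) as T1.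
  pose proof (hnorm_sub_triangle H (pi s (Y n)) (Y n) z) as T2.
  rewrite <- pi_hsub, hnorm_pi, (hnorm_sub_sym H z (Y n)) in T1. fold e in T1. lra.
Qed.

Definition displacement x t : R := hnorm (hsub (pi t x) x).

Lemma displacement_add x s t : displacement x (s + t) <= displacement x s + displacement x t.
Proof.
  unfold displacement. rewrite pi_add.
  eapply Rle_trans; [apply (hnorm_sub_triangle H _ (pi s x))|].
  rewrite <- pi_hsub, hnorm_pi; lra.
Qed.

Lemma displacement_opp x t : displacement x (- t) = displacement x t.
Proof.
  unfold displacement. rewrite <- (hnorm_pi t), pi_hsub, <- pi_add, Rplus_opp_r, pi_0.
  apply hnorm_sub_sym.
Qed.

Lemma displacement_0 x : displacement x 0 = 0.
Proof.
  unfold displacement, hnorm. rewrite pi_0.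
  fold (ip H (hsub x x) (hsub x x)). rewrite ip_sub_sub.
  replace (ip H x x - ip H x x - ip H x x + ip H x x) with 0 by ring. apply sqrt_0.
Qed.

(* Iterated midpoints of orbit points; its closure is the closed convex hull of the orbit. *)
Inductive orbit_hull x : H -> Prop :=
| orbit_hull_orbit t : orbit_hull x (pi t x)
| orbit_hull_hmid y w : orbit_hull x y -> orbit_hull x w -> orbit_hull x (hmid H y w).

Lemma orbit_hull_pi x s y : orbit_hull x y -> orbit_hull x (pi s y).
Proof.
  induction 1.
  - rewrite <- pi_add. constructor.
  - rewrite pi_hmid. constructor; auto.
Qed.

Section SmallDisplacement.

Variable x : H.
Hypothesis x_displacement : forall t, displacement x t <= hnorm x / 2.

Lemma orbit_hull_ip_ge y : orbit_hull x y -> ip H x x / 2 <= ip H y x.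
Proof.
  induction 1 as [t|y w _ IHy _ IHw].
  - pose proof (x_displacement t) as Ht. unfold displacement in Ht.
    pose proof (hnorm_ge0 H (hsub (pi t x) x)); pose proof (hnorm_ge0 H x).
    assert (Hsq : ip H (hsub (pi t x) x) (hsub (pi t x) x) <= ip H x x / 4).
    { rewrite <- !hnorm_sq. nra. }
    rewrite ip_sub_sub, ip_pi, (ip_sym H x (pi t x)) in Hsq.
    assert (0 <= ip H x x) by apply hinner_pos. lra.
  - unfold hmid. rewrite ip_scalel, ip_addl. lra.
Qed.

Lemma orbit_hull_limit_neq0 Y z : x <> hzero ->
  (forall n, orbit_hull x (Y n)) -> hlim H Y z -> z <> hzero.
Proof.
  intros Hx0 HY Hz ->.
  assert (Hnx : 0 < hnorm x).
  { destruct (Rle_lt_or_eq_dec _ _ (hnorm_ge0 H x)) as [L|L]; auto.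
    exfalso; apply Hx0, ip_eq0. rewrite <- hnorm_sq, <- L; ring. }
  destruct (Hz (hnorm x / 4)) as [N HN]; [lra|].
  pose proof (HN N (le_n N)) as HYN.
  pose proof (orbit_hull_ip_ge _ (HY N)) as Hge. rewrite <- hnorm_sq in Hge.
  pose proof (cauchy_schwarz H (hsub (Y N) hzero) x) as Hcs.
  rewrite ip_subl, ip_zerol, Rminus_0_r in Hcs.
  pose proof (Rle_abs (ip H (Y N) x)).
  assert (hnorm (hsub (Y N) hzero) * hnorm x <= hnorm x / 4 * hnorm x)
    by (apply Rmult_le_compat_r; lra).
  nra.
Qed.

Lemma invariant_vector_of_small_displacement : x <> hzero ->
  exists v : H, v <> hzero /\ forall t, pi t v = v.
Proof.
  intros Hx0.
  destruct (minimizing_seq_exists H (orbit_hull x) _ (orbit_hull_orbit x 0)) as [m [Y HY]].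
  destruct (minimizing_seq_converges H _ (orbit_hull_hmid x) m Y HY) as [z Hz].
  exists z; split.
  - apply (orbit_hull_limit_neq0 Y); auto. apply HY.
  - apply (minimizing_seq_limit_fixed (orbit_hull x) m Y); auto.
    + apply orbit_hull_hmid.
    + apply orbit_hull_pi.
Qed.

End SmallDisplacement.

End Representation.

Theorem mainTheorem12 (p : list R) (hp : nonconstant_poly p) (delta : R) (hdelta : 0 < delta) :
  kazhdan_set (fun t => (- delta < t < delta) \/ exists k : nat, t = peval p (INR k)).
Proof.
  destruct (fdiff_iter_peval_affine p hp) as [k [alpha [beta [Halpha Haff]]]].
  destruct (INR_archimed delta (Rabs alpha) hdelta) as [N HN].
  set (K := 2 * 2 ^ k + INR N).
  assert (HK : 0 < K) by (unfold K; pose proof (pos_INR N); pose proof (pow_lt 2 k); lra).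
  exists (/ (2 * K)); split; [apply Rinv_0_lt_compat; lra|].
  intros H pi Hpi _ [x [c [Hc HQ]]].
  assert (Hc0 : 0 <= c).
  { rewrite <- (displacement_0 H pi Hpi x). apply HQ; left; lra. }
  assert (Hdisp : forall t, displacement H pi x t <= K * c).
  { apply (length_bound_of_fdiff_affine _ (displacement_add H pi Hpi x)
      (displacement_opp H pi Hpi x) (displacement_0 H pi Hpi x) (peval p) k alpha beta delta);
      auto.
    - intros s Hs. apply HQ; left; apply Rabs_def2 in Hs; lra.
    - intros m; apply HQ; right; eauto. }
  apply (invariant_vector_of_small_displacement H pi Hpi x).
  - intros t. apply (Rle_trans _ _ _ (Hdisp t)).
    replace (hnorm x / 2) with (K * (/ (2 * K) * hnorm x)) by (field; lra).
    apply Rmult_le_compat_l; lra.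
  - intros ->. rewrite hnorm_zero, Rmult_0_r in Hc. lra.
Qed.
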